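(* Let $G$ and $H$ be topological groupoids and let $\pi\colon G\to H$ be a fiberwise groupoid covering map. Then for every $u\in G^0$, the restriction $\pi|_{G^u}\colon G^u\to H^{\pi(u)}$ (respectively $\pi|_{G_u}\colon G_u\to H_{\pi(u)}$) is a regular covering map implemented by the action of the group $\pi^{-1}(\pi(u))$ on $G^u$ by left multiplication (respectively on $G_u$ by right multiplication).
   Context: A topological groupoid is a small category with all morphisms invertible and a topology making multiplication and inversion continuous; $G^0$ is the unit space, $d,r$ domain and range, $G^u=r^{-1}(u)$, $G_u=d^{-1}(u)$. A fiberwise groupoid covering $\pi\colon G\to H$ is a surjective groupoid homomorphism that restricts to a homeomorphism $G^0\to H^0$ and is a local homeomorphism. For $u\in G^0$, $\pi^{-1}(\pi(u))$ is a group under the multiplication of $G$, all of whose elements have range and domain $u$. *)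

From HB Require Import structures.
From mathcomp Require Import all_boot all_order.
From mathcomp Require Import all_classical topology.
Set Implicit Arguments. Unset Strict Implicit. Unset Printing Implicit Defensive.
Local Open Scope classical_set_scope.

Definition open_in (T : topologicalType) (A U : set T) : Prop :=
  exists O : set T, open O /\ U = A `&` O.

Definition cont_in (T S : topologicalType) (A : set T) (B : set S) (f : T -> S) : Prop :=
  (forall x, A x -> B (f x)) /\
  (forall V, open_in B V -> open_in A (A `&` f @^-1` V)).

Definition homeo_in (T S : topologicalType) (A : set T) (B : set S) (f : T -> S) : Prop :=
  cont_in A B f /\
  exists g : S -> T, cont_in B A g /\
    (forall x, A x -> g (f x) = x) /\ (forall y, B y -> f (g y) = y).

Definition local_homeo (T S : topologicalType) (f : T -> S) : Prop :=
  forall x, exists U : set T, [/\ open U, U x, open (f @` U) & homeo_in U (f @` U) f].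

Definition covering_in (T S : topologicalType) (X : set T) (Y : set S) (p : T -> S) : Prop :=
  p @` X = Y /\
  forall y, Y y -> exists V : set S, [/\ open_in Y V, V y &
    exists (I : Type) (W : I -> set T),
      [/\ forall i, open_in X (W i),
          forall i j, i <> j -> W i `&` W j = set0,
          X `&` p @^-1` V = \bigcup_i W i &
          forall i, homeo_in (W i) V p]].

(* Composition convention: g h is defined iff gd g = gr h; then
   gd (g h) = gd h and gr (g h) = gr g. *)
Record groupoid (T : Type) := Groupoid {
  gd : T -> T;
  gr : T -> T;
  gmul : T -> T -> T;
  ginv : T -> T;
  gr_gd : forall g, gr (gd g) = gd g;
  gd_gr : forall g, gd (gr g) = gr g;
  gd_mul : forall g h, gd g = gr h -> gd (gmul g h) = gd h;
  gr_mul : forall g h, gd g = gr h -> gr (gmul g h) = gr g;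
  gmulA : forall g h k, gd g = gr h -> gd h = gr k ->
    gmul g (gmul h k) = gmul (gmul g h) k;
  gmul_gd : forall g, gmul g (gd g) = g;
  gmul_gr : forall g, gmul (gr g) g = g;
  gd_inv : forall g, gd (ginv g) = gr g;
  gr_inv : forall g, gr (ginv g) = gd g;
  gmulV : forall g, gmul g (ginv g) = gr g;
  gmulVg : forall g, gmul (ginv g) g = gd g
}.

Definition unit_space T (G : groupoid T) : set T := range (gd G).
Definition composable T (G : groupoid T) : set (T * T) :=
  [set gh | gd G gh.1 = gr G gh.2].

Definition topological_groupoid (T : topologicalType) (G : groupoid T) : Prop :=
  cont_in (composable G) setT (fun gh : T * T => gmul G gh.1 gh.2) /\
  continuous (ginv G).

Definition groupoid_hom T S (G : groupoid T) (H : groupoid S) (pi : T -> S) : Prop :=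
  forall g h, gd G g = gr G h ->
    gd H (pi g) = gr H (pi h) /\ pi (gmul G g h) = gmul H (pi g) (pi h).

Definition fiberwise_covering (T S : topologicalType) (G : groupoid T) (H : groupoid S)
    (pi : T -> S) : Prop :=
  [/\ groupoid_hom G H pi, (forall y, exists x, pi x = y),
      homeo_in (unit_space G) (unit_space H) pi & local_homeo pi].

From mathcomp Require Import all_boot all_order.
From mathcomp Require Import all_classical topology.
Set Implicit Arguments. Unset Strict Implicit. Unset Printing Implicit Defensive.
Local Open Scope classical_set_scope.

(* Since pi is injective on units, every k in K := pi^-1(pi u) is an arrow from
   u to u, so K acts on G^u by left translation; this action preserves pi, is
   free, and is transitive on the fibres of pi.  Given h in H^(pi u), pick g with
   pi g = h and an open U around g mapped homeomorphically by pi onto an open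
   set.  The translates k (G^u n U), k in K, are then disjoint open sheets over
   H^(pi u) n pi(U), each carried homeomorphically onto it by pi.  The
   statement for G_u is the one for G^u in the opposite groupoid. *)

Lemma open_in_setI (T : topologicalType) (A O : set T) : open O -> open_in A (A `&` O).
Proof. by move=> oO; exists O. Qed.

Section SubspaceMaps.
Variables T S R : topologicalType.
Implicit Types (A : set T) (B : set S) (C : set R).

Lemma continuous_cont_in A B (f : T -> S) :
  continuous f -> (forall x, A x -> B (f x)) -> cont_in A B f.
Proof.
move=> cf fAB; split=> // _ [O [oO ->]].
exists (f @^-1` O); split; first by apply: open_comp => // x _; exact: cf.
apply/seteqP; split=> x /= [Ax Ox]; first by case: Ox.
by split=> //; split=> //; exact: fAB.
Qed.

Lemma cont_in_restrict A (A' : set T) B (B' : set S) (f : T -> S) :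
  cont_in A B f -> A' `<=` A -> (forall x, A' x -> B' (f x)) -> cont_in A' B' f.
Proof.
move=> [fAB cf] sA'A fA'B'; split=> // _ [O [oO ->]].
have [O' [oO' eO']] := cf (B `&` O) (open_in_setI B oO).
exists O'; split=> //; apply/seteqP; split=> x /= [A'x].
  move=> [_ Ox]; split=> //.
  have : (A `&` f @^-1` (B `&` O)) x by split; [exact: sA'A | split=> //; exact/fAB/sA'A].
  by rewrite eO' => -[].
move=> O'x; split=> //.
have : (A `&` O') x by split=> //; exact: sA'A.
by rewrite -eO' => -[_ [_ Ox]]; split=> //; exact: fA'B'.
Qed.

Lemma cont_in_comp A B C (f : T -> S) (h : S -> R) :
  cont_in A B f -> cont_in B C h -> cont_in A C (h \o f).
Proof.
move=> [fAB cf] [hBC ch]; split=> [x Ax|W oW]; first exact/hBC/fAB.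
have [O [oO eO]] := cf _ (ch W oW).
exists O; split=> //; rewrite -eO; apply/seteqP; split=> x /= [Ax].
  by move=> Wx; split=> //; split=> //; exact: fAB.
by case.
Qed.

Lemma eq_cont_in A B (f f' : T -> S) :
  cont_in A B f -> (forall x, A x -> f x = f' x) -> cont_in A B f'.
Proof.
move=> [fAB cf] ff'; split=> [x Ax|W oW]; first by rewrite -ff' //; exact: fAB.
have -> : A `&` f' @^-1` W = A `&` f @^-1` W.
  by apply/seteqP; split=> x /= [Ax Wx]; split=> //; rewrite ?ff' // -?ff'.
exact: cf.
Qed.

End SubspaceMaps.

Section SubspaceHomeomorphisms.
Variables T S R : topologicalType.
Implicit Types (A : set T) (B : set S) (C : set R).

Lemma eq_homeo_in A B (f f' : T -> S) :
  homeo_in A B f -> (forall x, A x -> f x = f' x) -> homeo_in A B f'.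
Proof.
move=> [cf [g [cg [gf fg]]]] ff'; split; first exact: eq_cont_in cf ff'.
exists g; split=> //; split=> [x Ax|y By]; first by rewrite -ff' // gf.
by rewrite -ff' ?fg //; case: cg => + _; apply.
Qed.

Lemma homeo_in_restrict A (A' : set T) B (B' : set S) (f : T -> S) :
  homeo_in A B f -> A' `<=` A -> B' `<=` B ->
  (forall x, A' x -> B' (f x)) -> (forall y, B' y -> exists2 x, A' x & f x = y) ->
  homeo_in A' B' f.
Proof.
move=> [cf [g [cg [gf fg]]]] sA'A sB'B fA'B' onto.
split; first exact: cont_in_restrict cf sA'A fA'B'.
exists g; split; last by split=> [x /sA'A/gf|y /sB'B/fg].
apply: cont_in_restrict cg sB'B _ => _ /onto [x A'x <-].
by rewrite gf //; exact: sA'A.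
Qed.

Lemma homeo_in_comp A B C (f : T -> S) (h : S -> R) :
  homeo_in A B f -> homeo_in B C h -> homeo_in A C (h \o f).
Proof.
move=> [cf [g [cg [gf fg]]]] [ch [k [ck [kh hk]]]].
split; first exact: cont_in_comp cf ch.
exists (g \o k); split; first exact: cont_in_comp ck cg.
split=> [x Ax|y Cy] /=.
  by rewrite kh ?gf //; case: cf => + _; apply.
by rewrite fg ?hk //; case: ck => + _; apply.
Qed.

Lemma homeo_in_inj A B (f : T -> S) :
  homeo_in A B f -> forall x y, A x -> A y -> f x = f y -> x = y.
Proof. by move=> [_ [g [_ [gf _]]]] x y Ax Ay fxy; rewrite -(gf x Ax) fxy gf. Qed.

End SubspaceHomeomorphisms.

Section GroupoidAlgebra.
Variables (T : Type) (G : groupoid T).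
Implicit Types g k e : T.

Lemma unit_space_gd g : unit_space G (gd G g).
Proof. by exists g. Qed.

Lemma unit_space_gr g : unit_space G (gr G g).
Proof. by exists (gr G g); rewrite ?gd_gr. Qed.

Lemma gd_unit e : unit_space G e -> gd G e = e.
Proof. by move=> [g _ <-]; rewrite -{1}(gr_gd G g) gd_gr gr_gd. Qed.

Lemma gr_unit e : unit_space G e -> gr G e = e.
Proof. by move=> [g _ <-]; rewrite gr_gd. Qed.

Lemma gmulKg k g : gr G g = gd G k -> gmul G (ginv G k) (gmul G k g) = g.
Proof. by move=> gk; rewrite gmulA ?gd_inv ?gmulVg -?gk ?gmul_gr. Qed.

Lemma gmulKVg k g : gr G g = gr G k -> gmul G k (gmul G (ginv G k) g) = g.
Proof. by move=> gk; rewrite gmulA ?gr_inv ?gd_inv // gmulV -gk gmul_gr. Qed.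

Lemma gmulgK g k : gd G g = gr G k -> gmul G (gmul G g k) (ginv G k) = g.
Proof. by move=> gk; rewrite -gmulA ?gr_inv // gmulV -gk gmul_gd. Qed.

Lemma gmul_idem_gd g : gd G g = gr G g -> gmul G g g = g -> gd G g = g.
Proof.
move=> dg gg; have <- : gmul G (ginv G g) (gmul G g g) = gd G g by rewrite gg gmulVg.
by rewrite gmulA ?gd_inv // gmulVg dg gmul_gr.
Qed.

End GroupoidAlgebra.

Definition op_groupoid T (G : groupoid T) : groupoid T :=
  @Groupoid T (gr G) (gd G) (fun g h => gmul G h g) (ginv G)
    (gd_gr G) (gr_gd G)
    (fun g h e => gr_mul (esym e)) (fun g h e => gd_mul (esym e))
    (fun g h k e1 e2 => esym (gmulA (esym e2) (esym e1)))
    (gmul_gr G) (gmul_gd G) (gr_inv G) (gd_inv G) (gmulVg G) (gmulV G).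

Lemma unit_space_op T (G : groupoid T) : unit_space (op_groupoid G) = unit_space G.
Proof.
apply/seteqP; split=> x [g _ <-]; first exact: unit_space_gr.
by exists (gd G g); rewrite //= gr_gd.
Qed.

Lemma fiberwise_covering_op (T S : topologicalType) (G : groupoid T) (H : groupoid S)
    (pi : T -> S) :
  fiberwise_covering G H pi -> fiberwise_covering (op_groupoid G) (op_groupoid H) pi.
Proof.
move=> [hom surj units lh]; split=> //; last by rewrite !unit_space_op.
by move=> g h /= gh; have [] := hom h g (esym gh).
Qed.

Section Translations.
Variables (T : topologicalType) (G : groupoid T).
Hypothesis Gtop : topological_groupoid G.

Lemma lmul_cont_in k : cont_in [set g | gr G g = gd G k] setT (gmul G k).
Proof.
case: Gtop => mul_cont _.
apply: (cont_in_comp (f := fun g => (k, g))) mul_cont.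
apply: continuous_cont_in => [g|g gk]; last exact: esym gk.
by apply: cvg_pair; [exact: cvg_cst | exact: cvg_id].
Qed.

Lemma rmul_cont_in k : cont_in [set g | gd G g = gr G k] setT (fun g => gmul G g k).
Proof.
case: Gtop => mul_cont _.
apply: (cont_in_comp (f := fun g => (g, k))) mul_cont.
apply: continuous_cont_in => [g|g gk //].
by apply: cvg_pair; [exact: cvg_id | exact: cvg_cst].
Qed.

End Translations.

Section Homomorphism.
Variables (T S : Type) (G : groupoid T) (H : groupoid S) (pi : T -> S).
Hypothesis hom : groupoid_hom G H pi.

Lemma hom_unit e : unit_space G e -> unit_space H (pi e).
Proof.
move=> Ue; have [de re] := (gd_unit Ue, gr_unit Ue).
have [dpe mpe] := hom (etrans de (esym re)).
have ee : gmul G e e = e by rewrite -{2}de gmul_gd.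
by exists (pi e) => //; apply: gmul_idem_gd dpe _; rewrite -mpe ee.
Qed.

Lemma hom_gd g : pi (gd G g) = gd H (pi g).
Proof.
have [-> _] := hom (esym (gr_gd G g)).
by rewrite gr_unit //; exact/hom_unit/unit_space_gd.
Qed.

Lemma hom_gr g : pi (gr G g) = gr H (pi g).
Proof.
have [<- _] := hom (gd_gr G g).
by rewrite gd_unit //; exact/hom_unit/unit_space_gr.
Qed.

End Homomorphism.

Section RangeFibers.
Variables (T S : topologicalType) (G : groupoid T) (H : groupoid S) (pi : T -> S).
Hypothesis cov : fiberwise_covering G H pi.
Hypothesis lmul_cont : forall k, cont_in [set g | gr G g = gd G k] setT (gmul G k).
Variable u : T.
Hypothesis uU : unit_space G u.

Let hom : groupoid_hom G H pi. Proof. by case: cov. Qed.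

Let surj : forall h, exists g, pi g = h. Proof. by case: cov. Qed.

Let pi_inj_units : forall e e', unit_space G e -> unit_space G e' -> pi e = pi e' -> e = e'.
Proof. by case: cov => _ _ /homeo_in_inj. Qed.

Let unit_pi_u : unit_space H (pi u) := hom_unit hom uU.

Let lh : local_homeo pi. Proof. by case: cov. Qed.

Let K := pi @^-1` [set pi u].
Let X := [set g | gr G g = u].
Let Y := [set h | gr H h = pi u].

Lemma X_of_Y_pi g : Y (pi g) -> X g.
Proof.
move=> Ypg; apply: pi_inj_units; [exact: unit_space_gr | exact: uU |].
by rewrite (hom_gr hom).
Qed.

Lemma K_gd k : K k -> gd G k = u.
Proof.
move=> Kk; apply: pi_inj_units; [exact: unit_space_gd | exact: uU |].
by rewrite (hom_gd hom) Kk (gd_unit unit_pi_u).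
Qed.

Lemma K_gr k : K k -> gr G k = u.
Proof.
move=> Kk; apply: pi_inj_units; [exact: unit_space_gr | exact: uU |].
by rewrite (hom_gr hom) Kk (gr_unit unit_pi_u).
Qed.

Lemma K_inv k : K k -> K (ginv G k).
Proof.
move=> Kk; have [_ e] := hom (gd_inv G k).
rewrite gmulVg (K_gd Kk) Kk in e.
by rewrite /K /= -[LHS](gmul_gd H) -(hom_gd hom) gd_inv (K_gr Kk) -e.
Qed.

Lemma pi_lmul_K k g : K k -> X g -> pi (gmul G k g) = pi g.
Proof.
move=> Kk Xg; have [_ ->] := hom (etrans (K_gd Kk) (esym Xg)).
by rewrite Kk -Xg (hom_gr hom) gmul_gr.
Qed.

Lemma X_lmul_K k g : K k -> X g -> X (gmul G k g).
Proof. by move=> Kk Xg; rewrite /X /= gr_mul ?(K_gr Kk) ?(K_gd Kk) ?Xg. Qed.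

Lemma K_lmul_cont k : K k -> cont_in X X (gmul G k).
Proof.
move=> Kk; apply: cont_in_restrict (lmul_cont k) _ (fun g => X_lmul_K Kk).
by move=> g /= ->; rewrite (K_gd Kk).
Qed.

Lemma K_lmul_homeo k : K k -> homeo_in X X (gmul G k).
Proof.
move=> Kk; split; first exact: K_lmul_cont.
exists (gmul G (ginv G k)); split; first exact/K_lmul_cont/K_inv.
by split=> g Xg; [rewrite gmulKg // Xg (K_gd Kk) | rewrite gmulKVg // Xg (K_gr Kk)].
Qed.

Lemma K_lmul_free k g : K k -> X g -> gmul G k g = g -> k = u.
Proof.
move=> Kk Xg kg; have kg_comp := etrans (K_gd Kk) (esym Xg).
by rewrite -(gmulgK kg_comp) kg gmulV.
Qed.

Lemma K_lmul_transitive g g' : X g -> X g' -> pi g = pi g' ->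
  exists2 k, K k & g' = gmul G k g.
Proof.
move=> Xg Xg' pigg'.
have dgg' : gd G g' = gd G g.
  by apply: pi_inj_units; rewrite ?(hom_gd hom) ?pigg' //; exact: unit_space_gd.
exists (gmul G g' (ginv G g)); last by rewrite -gmulA ?gr_inv ?gd_inv // gmulVg -dgg' gmul_gd.
have [_ pig'V] := hom (etrans dgg' (esym (gr_inv G g))).
have [_ pigV] := hom (esym (gr_inv G g)).
by rewrite /K /= pig'V -pigg' -pigV gmulV Xg.
Qed.

(* the translate k (X `&` U) *)
Let sheet (U : set T) k := X `&` gmul G (ginv G k) @^-1` U.

Section Sheets.
Variable U : set T.
Hypothesis oU : open U.
Hypothesis piU : homeo_in U (pi @` U) pi.

Lemma open_in_sheet k : K k -> open_in X (sheet U k).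
Proof.
move=> Kk; have [_ cont] := K_lmul_cont (K_inv Kk).
suff <- : X `&` gmul G (ginv G k) @^-1` (X `&` U) = sheet U k by exact/cont/open_in_setI.
apply/seteqP; split=> g [Xg]; first by case.
by split=> //; split=> //; exact/X_lmul_K/Xg/K_inv.
Qed.

Lemma sheet_disjoint k k' g : K k -> K k' -> sheet U k g -> sheet U k' g -> k = k'.
Proof.
move=> Kk Kk' [Xg Ua] [_ Ua'].
set a := gmul G (ginv G k) g in Ua.
have a'a : gmul G (ginv G k') g = a.
  by apply: (homeo_in_inj piU) => //; rewrite !pi_lmul_K //; exact: K_inv.
have Xa : X a by exact/X_lmul_K/Xg/K_inv.
have ka : gmul G k a = g by rewrite gmulKVg // Xg (K_gr Kk).
have k'a : gmul G k' a = g by rewrite -a'a gmulKVg // Xg (K_gr Kk').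
transitivity (gmul G g (ginv G a)); first by rewrite -ka gmulgK // Xa (K_gd Kk).
by rewrite -k'a gmulgK // Xa (K_gd Kk').
Qed.

Lemma sheets_cover :
  X `&` pi @^-1` (Y `&` pi @` U) = \bigcup_(i : {k | K k}) sheet U (sval i).
Proof.
apply/seteqP; split=> g.
  move=> [Xg [_ [a Ua pag]]].
  have Xa : X a by apply: X_of_Y_pi; rewrite /Y /= pag -(hom_gr hom) Xg.
  have [k Kk ->] := K_lmul_transitive Xa Xg pag.
  exists (exist _ k Kk) => //; split; first exact: X_lmul_K.
  by rewrite /= gmulKg // Xa (K_gd Kk).
move=> [[k Kk] _ [Xg Ug]]; split=> //; split; first by rewrite /Y /= -(hom_gr hom) Xg.
by exists (gmul G (ginv G k) g) => //; exact: pi_lmul_K (K_inv Kk) Xg.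
Qed.

Lemma homeo_sheet k : K k -> homeo_in (sheet U k) (Y `&` pi @` U) pi.
Proof.
move=> Kk; have Kk' := K_inv Kk.
have to_XU : homeo_in (sheet U k) (X `&` U) (gmul G (ginv G k)).
  apply: homeo_in_restrict (K_lmul_homeo Kk') _ _ _ _.
  - by move=> g [].
  - by move=> g [].
  - by move=> g [Xg Ug]; split=> //; exact: X_lmul_K.
  - move=> a [Xa Ua]; have ka : gmul G (ginv G k) (gmul G k a) = a.
      by rewrite gmulKg // Xa (K_gd Kk).
    by exists (gmul G k a) => //; split; [exact: X_lmul_K | rewrite /= ka].
have pi_XU : homeo_in (X `&` U) (Y `&` pi @` U) pi.
  apply: homeo_in_restrict piU _ _ _ _.
  - by move=> g [].
  - by move=> h [].
  - by move=> a [Xa Ua]; split; [rewrite /Y /= -(hom_gr hom) Xa | exists a].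
  - move=> h [Yh [a Ua pia]]; exists a => //.
    by split=> //; apply: X_of_Y_pi; rewrite pia.
apply: eq_homeo_in (homeo_in_comp to_XU pi_XU) _ => g [Xg _] /=.
exact: pi_lmul_K Kk' Xg.
Qed.

End Sheets.

Lemma covering_range_fiber : covering_in X Y pi.
Proof.
split.
  apply/seteqP; split=> [_ [g Xg <-]|h Yh]; first by rewrite /Y /= -(hom_gr hom) Xg.
  by have [g pig] := surj h; exists g => //; apply: X_of_Y_pi; rewrite pig.
move=> h Yh; have [g pig] := surj h; have [U [oU Ug opiU piU]] := lh g.
exists (Y `&` pi @` U); split; [exact: open_in_setI opiU | by split=> //; exists g |].
exists {k | K k}, (fun i => sheet U (sval i)); split.
- by move=> [k Kk]; exact: open_in_sheet.
- move=> [k Kk] [k' Kk'] neq; apply/seteqP; split=> // x [Wx Wx'].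
  by case: neq; apply: eq_exist; exact: sheet_disjoint Wx Wx'.
- exact: sheets_cover.
- by move=> [k Kk]; exact: homeo_sheet.
Qed.

Lemma range_fiber_regular_covering :
  [/\ covering_in X Y pi,
      (forall k, K k -> forall g, X g -> gd G k = gr G g /\ pi (gmul G k g) = pi g),
      (forall k, K k -> homeo_in X X (gmul G k)),
      (forall k g, K k -> X g -> gmul G k g = g -> k = u) &
      (forall g g', X g -> X g' -> pi g = pi g' -> exists2 k, K k & g' = gmul G k g)].
Proof.
split; [exact: covering_range_fiber | | exact: K_lmul_homeo | exact: K_lmul_free |].
  by move=> k Kk g Xg; rewrite (K_gd Kk) Xg; split=> //; exact: pi_lmul_K.
exact: K_lmul_transitive.
Qed.

End RangeFibers.

Theorem lemma9p3 (T S : topologicalType) (G : groupoid T) (H : groupoid S) (pi : T -> S) :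
  topological_groupoid G -> topological_groupoid H -> fiberwise_covering G H pi ->
  forall u, unit_space G u ->
  let K := pi @^-1` [set pi u] in
  (* range fibers G^u, left multiplication *)
  [/\ covering_in [set g | gr G g = u] [set h | gr H h = pi u] pi,
      (forall k, K k -> forall g, gr G g = u ->
         gd G k = gr G g /\ pi (gmul G k g) = pi g),
      (forall k, K k ->
         homeo_in [set g | gr G g = u] [set g | gr G g = u] (gmul G k)),
      (forall k g, K k -> gr G g = u -> gmul G k g = g -> k = u) &
      (forall g g', gr G g = u -> gr G g' = u -> pi g = pi g' ->
         exists2 k, K k & g' = gmul G k g)]
  /\
  (* domain fibers G_u, right multiplication *)
  [/\ covering_in [set g | gd G g = u] [set h | gd H h = pi u] pi,
      (forall k, K k -> forall g, gd G g = u ->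
         gd G g = gr G k /\ pi (gmul G g k) = pi g),
      (forall k, K k ->
         homeo_in [set g | gd G g = u] [set g | gd G g = u] (fun g => gmul G g k)),
      (forall k g, K k -> gd G g = u -> gmul G g k = g -> k = u) &
      (forall g g', gd G g = u -> gd G g' = u -> pi g = pi g' ->
         exists2 k, K k & g' = gmul G g k)].
Proof.
move=> Gtop _ cov u uU K.
split; first exact (range_fiber_regular_covering cov (lmul_cont_in Gtop) uU).
have uU' : unit_space (op_groupoid G) u by rewrite unit_space_op.
have [cover act rmul_homeo free transitive] :=
  range_fiber_regular_covering (fiberwise_covering_op cov) (rmul_cont_in Gtop) uU'.
split=> // k Kk g gu.
by case: (act k Kk g gu) => /esym.
Qed.
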